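(* Let $K$ be a finite index subgroup of $F_2$. Then for any $h\in\Xi$ and any $z\in F_2$, \[ \lim_{n\to\infty} d_n^h(zK)=\frac{1}{[F_2:K]}. \]
   Context: $F_2$ is the free group on $a,b$ and $\Xi=\{a,b,a^{-1},b^{-1}\}$; $S_n$ is the set of elements of $F_2$ whose reduced word in $\Xi$ has length $n$. For $A\subseteq F_2$, $h\in\Xi$ and $n\geq1$, define $d_n^h(A)=\frac{1}{2}\left(\frac{|A\cap S_n|}{|S_n|}+\frac{|A\cap hS_n|}{|S_n|}\right)$, where $hS_n=\{hg:g\in S_n\}$. *)

From HB Require Import structures.
From mathcomp Require Import all_boot all_order all_algebra.
From mathcomp Require Import all_classical all_reals all_analysis.
Set Implicit Arguments. Unset Strict Implicit. Unset Printing Implicit Defensive.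
Import Order.TTheory GRing.Theory Num.Theory.

(* Letters Xi = {a, b, a^-1, b^-1} encoded as 'I_4 : 0 = a, 1 = b, 2 = a^-1, 3 = b^-1. *)
Definition letter := 'I_4.
Definition linv (x : letter) : letter := inord ((x + 2) %% 4).

Definition nonred (x y : letter) : bool := y != linv x.
Definition reduced (w : seq letter) : bool :=
  if w is x :: s then path nonred x s else true.

Definition push (x : letter) (s : seq letter) : seq letter :=
  if s is y :: s' then (if y == linv x then s' else x :: s) else [:: x].
Definition reduce (w : seq letter) : seq letter := foldr push [::] w.

Lemma reduce_reduced (w : seq letter) : reduced (reduce w).
Proof.
elim: w => [|x w IH] //=; rewrite /push.
case Hr: (reduce w) IH => [|y s] //= Hp.
case: ifP => Hy //=; first by case: s Hp {Hr} => //= z s /andP [].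
by rewrite /nonred Hy.
Qed.

Definition F2 := {w : seq letter | reduced w}.
Definition F2one : F2 := exist _ [::] isT.
Definition F2mul (u v : F2) : F2 :=
  exist _ (reduce (proj1_sig u ++ proj1_sig v)) (reduce_reduced _).
Definition F2inv (u : F2) : F2 :=
  exist _ (reduce (rev (map linv (proj1_sig u)))) (reduce_reduced _).
Definition F2gen (h : letter) : F2 := exist _ [:: h] isT.
Definition wlen (u : F2) : nat := size (proj1_sig u).

Definition sphere (n : nat) : seq F2 :=
  pmap (fun w : seq letter => match boolP (reduced w) with
                            | AltTrue p => Some (exist _ w p)
                            | AltFalse _ => None end)
       [seq val t | t : n.-tuple letter].

Definition hsphere (h : letter) (n : nat) : seq F2 :=
  undup (map (F2mul (F2gen h)) (sphere n)).

(* |A ∩ s| for a duplicate-free list s *)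
Definition cnt {R : realType} (A : set F2) (s : seq F2) : R :=
  \sum_(x <- s) (`[< A x >])%:R.

Definition dens {R : realType} (h : letter) (A : set F2) (n : nat) : R :=
  2^-1 * (cnt A (sphere n) / (size (sphere n))%:R
          + cnt A (hsphere h n) / (size (sphere n))%:R).

Definition subgroup (K : set F2) : Prop :=
  [/\ K F2one, (forall x y, K x -> K y -> K (F2mul x y))
    & (forall x, K x -> K (F2inv x))].

Definition lcoset (z : F2) (K : set F2) : set F2 := [set F2mul z k | k in K].

Definition has_index (K : set F2) (m : nat) : Prop :=
  exists r : 'I_m -> F2,
    (forall g, exists i, lcoset g K = lcoset (r i) K) /\
    injective (fun i => lcoset (r i) K).

From HB Require Import structures.
From mathcomp Require Import all_boot all_order all_algebra.
From mathcomp Require Import all_classical all_reals all_analysis.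
From mathcomp Require Import ring lra.
Set Implicit Arguments. Unset Strict Implicit. Unset Printing Implicit Defensive.
Import Order.TTheory GRing.Theory Num.Theory numFieldNormedType.Exports.
Local Open Scope ring_scope.
Local Open Scope classical_set_scope.

(* Let u_n(i, x) be 3^-n times the number of reduced words of length n + 1
   that start with x and lie in the i-th left coset of K: the mass at the
   vertex i of the Schreier graph of F_2/K carried by the non-backtracking
   walks whose last step is x.  A step of the walk averages u_n over the three
   non-backtracking continuations, so it preserves the total mass and lowers
   the energy sum u_n^2 by a ninth of the sum of the squares of the
   differences u_n(i, y) - u_n(i, y').  These differences thus tend to 0, and
   the letter mean mu_n(i) of u_n(i, -) satisfies mu_{n+1}(i) ~ mu_n(x i) for
   every letter x, so all neighbours of a vertex have asymptotically equal
   means.  Hence the pair means mu_n(i) + mu_n(h i) are asymptotically equal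
   along edges, hence everywhere since the action is transitive; as they sum
   to 2, each tends to 2/[F_2 : K].  Finally d_{n+1}^h(zK) is half the pair
   mean at zK for the letter h^-1. *)

Section NullSequences.
Variable R : realType.
Implicit Types a b : R^nat.

Lemma cvg0_ext a b : (forall n, a n = b n) -> b @ \oo --> 0 -> a @ \oo --> 0.
Proof. by move=> /eq_cvg ->. Qed.

Lemma cvg0D a b : a @ \oo --> 0 -> b @ \oo --> 0 ->
  (fun n => a n + b n) @ \oo --> 0.
Proof. by move=> /cvgD /[apply]; rewrite addr0. Qed.

Lemma cvg0B a b : a @ \oo --> 0 -> b @ \oo --> 0 ->
  (fun n => a n - b n) @ \oo --> 0.
Proof. by move=> /cvgB /[apply]; rewrite subr0. Qed.

Lemma cvg0Ml (c : R) a : a @ \oo --> 0 -> (fun n => c * a n) @ \oo --> 0.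
Proof. by move=> /(cvgMl_tmp (a := c)); rewrite mulr0. Qed.

Lemma cvg0_sum (I : Type) (s : seq I) (P : pred I) (F : I -> R^nat) :
  (forall i, P i -> F i @ \oo --> 0) ->
  (fun n => \sum_(i <- s | P i) F i n) @ \oo --> 0.
Proof.
move=> F0; elim: s => [|i s IH].
  by under eq_cvg do rewrite big_nil; exact: cvg_cst.
under eq_cvg do rewrite big_cons.
by case Pi: (P i); [exact: cvg0D (F0 _ Pi) IH | exact: IH].
Qed.

Lemma cvg0_sqr_le a b : (forall n, a n ^+ 2 <= b n) -> b @ \oo --> 0 ->
  a @ \oo --> 0.
Proof.
move=> ab /cvgr0Pnorm_le b0; apply/cvgr0Pnorm_le => e e0.
near=> n; have := ab n; have : `|b n| <= e * e by near: n; apply: b0; exact: mulr_gt0.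
rewrite ler_norml => /andP[_ be] abn; rewrite ler_norml; apply/andP; split; nra.
Unshelve. all: by end_near.
Qed.

Lemma cvg0_sub_succ (E : R^nat) : (forall n, 0 <= E n) ->
  (forall n, E n.+1 <= E n) -> (fun n => E n - E n.+1) @ \oo --> 0.
Proof.
move=> E_ge0 E_dec.
have E_cvg : E @ \oo --> inf (range E).
  by apply: nonincreasing_cvgn; [apply/nonincreasing_seqP | exists 0 => _ [n _ <-]].
by rewrite -(subrr (inf (range E))); apply: cvgB => //; rewrite cvg_shiftS.
Qed.

End NullSequences.

Lemma linvK : involutive linv.
Proof.
move=> x; apply: val_inj => /=; rewrite /linv !inordK ?ltn_pmod //.
by case: x => [[|[|[|[|k]]]] ?].
Qed.

Lemma reduced_behead x s : reduced (x :: s) -> reduced s.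
Proof. by case: s => //= y s /andP[]. Qed.

Lemma push_reduced x s : reduced s -> reduced (push x s).
Proof.
case: s => [|y s] //= s_red; case: ifP => [_|yx] /=; last by rewrite /nonred yx.
exact: reduced_behead s_red.
Qed.

Lemma push_linvK x s : reduced s -> push x (push (linv x) s) = s.
Proof.
case: s => [|y s] /=; first by rewrite eqxx.
rewrite linvK; case: eqP => [-> | _] /=; last by rewrite eqxx.
by case: s => [|z s] //= /andP[/negbTE ->].
Qed.

Lemma reduce_id w : reduced w -> reduce w = w.
Proof.
elim: w => //= x w IH w_red; rewrite IH; last exact: reduced_behead w_red.
by case: w w_red {IH} => //= y w /andP[/negbTE ->].
Qed.

Lemma reduceK w : reduce (reduce w) = reduce w.
Proof. exact/reduce_id/reduce_reduced. Qed.

Lemma foldr_push_reduced t s : reduced t -> reduced (foldr push t s).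
Proof. by move=> t_red; elim: s => //= x s; apply: push_reduced. Qed.

Lemma foldr_push_push x r t : reduced r -> reduced t ->
  foldr push t (push x r) = push x (foldr push t r).
Proof.
case: r => [|y r] //= r_red t_red; case: eqP => //= ->.
by rewrite push_linvK // foldr_push_reduced // (reduced_behead r_red).
Qed.

Lemma reduce_cat u v : reduce (u ++ v) = foldr push (reduce v) u.
Proof. exact: foldr_cat. Qed.

Lemma foldr_push_reduce t s : reduced t -> foldr push t (reduce s) = foldr push t s.
Proof.
move=> t_red; elim: s => //= x s IH.
by rewrite foldr_push_push ?reduce_reduced // IH.
Qed.

Lemma foldr_push_linv t w : reduced t -> foldr push t (w ++ rev (map linv w)) = t.
Proof.
elim: w t => //= x w IH t t_red.
by rewrite rev_cons -cats1 catA foldr_cat /= IH ?push_reduced // push_linvK.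
Qed.

Lemma F2mulA u v w : F2mul (F2mul u v) w = F2mul u (F2mul v w).
Proof.
case: u v w => [u ?] [v ?] [w ?]; apply: val_inj => /=.
rewrite reduce_cat foldr_push_reduce ?reduce_reduced // -reduce_cat -catA.
by rewrite [in RHS]reduce_cat reduceK -reduce_cat.
Qed.

Lemma F2mul1l u : F2mul F2one u = u.
Proof. by case: u => w w_red; apply: val_inj; rewrite /= reduce_id. Qed.

Lemma F2mul1r u : F2mul u F2one = u.
Proof. by case: u => w w_red; apply: val_inj; rewrite /= cats0 reduce_id. Qed.

Lemma F2mulV u : F2mul u (F2inv u) = F2one.
Proof.
apply: val_inj; rewrite /= reduce_cat reduce_id ?reduce_reduced //.
by rewrite -reduce_cat /reduce foldr_push_linv.
Qed.

Lemma F2mul_linv_gen x : F2mul (F2gen (linv x)) (F2gen x) = F2one.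
Proof. by apply: val_inj; rewrite /= linvK eqxx. Qed.

Lemma F2gen_mulK x : cancel (F2mul (F2gen x)) (F2mul (F2gen (linv x))).
Proof. by move=> u; rewrite -F2mulA F2mul_linv_gen F2mul1l. Qed.

Lemma F2_cons x w (xw_red : reduced (x :: w)) :
  exist _ (x :: w) xw_red = F2mul (F2gen x) (exist _ w (reduced_behead xw_red)).
Proof. by apply: val_inj; rewrite /= -[push x _]/(reduce (x :: w)) reduce_id. Qed.

Lemma sumr_neq (I : finType) (V : zmodType) (a : I -> V) z :
  \sum_(y | y != z) a y = \sum_y a y - a z.
Proof. by rewrite [in RHS](bigD1 z) //= addrC addrK. Qed.

Lemma ler_sum_term (R : numDomainType) (I : finType) (F : I -> R) i :
  (forall j, 0 <= F j) -> F i <= \sum_j F j.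
Proof. by move=> F_ge0; rewrite (bigD1 i) //= lerDl sumr_ge0. Qed.

Lemma ler_sum3_term (R : numDomainType) (I J K : finType) (F : I -> J -> K -> R)
    i j k :
  (forall i j k, 0 <= F i j k) -> F i j k <= \sum_i \sum_j \sum_k F i j k.
Proof.
move=> F_ge0; have sum_ge0 a b : 0 <= \sum_c F a b c by apply: sumr_ge0.
apply: le_trans (ler_sum_term k (F_ge0 i j)) _.
apply: le_trans (ler_sum_term j (sum_ge0 i)) _.
by apply: ler_sum_term => a; apply: sumr_ge0.
Qed.

Lemma sum_linv (V : nmodType) (F : letter -> V) :
  \sum_x F (linv x) = \sum_x F x.
Proof. by rewrite [RHS](reindex_inj (inv_inj linvK)). Qed.

(* The energy lost at one vertex in one step of the walk. *)
Lemma sum_sqr_avg_neq (R : numFieldType) (a : letter -> R) :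
  \sum_z a z ^+ 2 - \sum_z (3^-1 * \sum_(y | y != z) a y) ^+ 2 =
  9^-1 * \sum_y \sum_y' (a y - a y') ^+ 2.
Proof.
under [X in _ - X]eq_bigr do rewrite sumr_neq.
by rewrite !big_ord_recr !big_ord0 /=; field.
Qed.

Section NonBacktrackingWalk.

(* [u n i x] is the mass at vertex [i] of the walks of length n + 1 whose last
   step is [x]; it comes from the walks at vertex [x^-1 i] whose last step is
   not [x^-1], each of which continues along three non-backtracking steps. *)
Variables (R : realType) (m : nat) (s : letter -> 'I_m -> 'I_m).
Hypothesis sK : forall x, cancel (s x) (s (linv x)).
Hypothesis s_transitive : forall i j, exists w, foldr s i w = j.
Variable u : nat -> 'I_m -> letter -> R.
Hypothesis u_succ : forall n i x,
  u n.+1 i x = 3^-1 * \sum_(y | y != linv x) u n (s (linv x) i) y.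

Definition mean n i := 4^-1 * \sum_x u n i x.
Definition energy n := \sum_i \sum_x u n i x ^+ 2.

Lemma sum_act x (F : 'I_m -> R) : \sum_i F (s x i) = \sum_i F i.
Proof. by rewrite [RHS](reindex_inj (can_inj (sK x))). Qed.

Lemma sum_u_succ (G : R -> R) n :
  \sum_i \sum_x G (u n.+1 i x) =
  \sum_j \sum_z G (3^-1 * \sum_(y | y != z) u n j y).
Proof.
under eq_bigr do under eq_bigr do rewrite u_succ.
rewrite exchange_big [RHS]exchange_big -(sum_linv (fun z => \sum_j _)) /=.
by apply: eq_bigr => x _; rewrite linvK; exact: sum_act.
Qed.

Lemma sum_mean_succ n : \sum_i mean n.+1 i = \sum_i mean n i.
Proof.
rewrite -!mulr_sumr (sum_u_succ id); congr (_ * _); apply: eq_bigr => j _.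
rewrite -mulr_sumr; under eq_bigr do rewrite sumr_neq.
by rewrite sumrB sumr_const card_ord -mulr_natr; field.
Qed.

Lemma sum_mean n : \sum_i mean n i = \sum_i mean 0 i.
Proof. by elim: n => // n <-; exact: sum_mean_succ. Qed.

Lemma energy_succ n : energy n - energy n.+1 =
  9^-1 * \sum_j \sum_y \sum_y' (u n j y - u n j y') ^+ 2.
Proof.
rewrite /energy (sum_u_succ (fun r => r ^+ 2)) -sumrB mulr_sumr.
by apply: eq_bigr => j _; rewrite sum_sqr_avg_neq.
Qed.

Lemma u_sub_cvg0 j y y' : (fun n => u n j y - u n j y') @ \oo --> 0.
Proof.
pose D n := \sum_j \sum_y \sum_y' (u n j y - u n j y') ^+ 2.
have D_ge0 n : 0 <= D n by do 3!(apply: sumr_ge0 => ? _); exact: sqr_ge0.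
have D_cvg0 : D @ \oo --> 0.
  apply: (cvg0_ext (b := fun n => 9 * (energy n - energy n.+1))).
    by move=> n; rewrite /D energy_succ; field.
  apply: cvg0Ml; apply: cvg0_sub_succ => n.
    by do 2!(apply: sumr_ge0 => ? _); exact: sqr_ge0.
  by rewrite -subr_ge0 energy_succ; apply: mulr_ge0 _ (D_ge0 n); rewrite invr_ge0 ler0n.
apply: cvg0_sqr_le D_cvg0 => n.
by apply: (ler_sum3_term (F := fun j y y' => (u n j y - u n j y') ^+ 2)) => *; exact: sqr_ge0.
Qed.

Lemma u_sub_mean_cvg0 j y : (fun n => u n j y - mean n j) @ \oo --> 0.
Proof.
apply: (cvg0_ext (b := fun n => 4^-1 * \sum_y' (u n j y - u n j y'))).
  by move=> n; rewrite sumrB sumr_const card_ord /mean -mulr_natr; field.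
by apply/cvg0Ml/cvg0_sum => y' _; exact: u_sub_cvg0.
Qed.

Lemma mean_succ_cvg0 i x :
  (fun n => mean n.+1 i - mean n (s (linv x) i)) @ \oo --> 0.
Proof.
set j := s (linv x) i.
have step : (fun n => u n.+1 i x - mean n j) @ \oo --> 0.
  apply: (cvg0_ext (b := fun n =>
    3^-1 * \sum_(y | y != linv x) (u n j y - mean n j))).
    move=> n; rewrite u_succ sumrB !sumr_neq sumr_const card_ord.
    by rewrite /mean -mulr_natr; field.
  by apply/cvg0Ml/cvg0_sum => y _; exact: u_sub_mean_cvg0.
have := u_sub_mean_cvg0 i x; rewrite -cvg_shiftS => shifted.
apply: (cvg0_ext (b := fun n => (u n.+1 i x - mean n j) - (u n.+1 i x - mean n.+1 i))).
  by move=> n; ring.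
exact: cvg0B.
Qed.

Lemma mean_neighbors_cvg0 i a b :
  (fun n => mean n (s a i) - mean n (s b i)) @ \oo --> 0.
Proof.
have := mean_succ_cvg0 i (linv a); have := mean_succ_cvg0 i (linv b).
rewrite !linvK => Hb Ha.
by apply: (cvg0_ext _ (cvg0B Hb Ha)) => n; ring.
Qed.

(* Single means may oscillate with the parity of n, as the Schreier graph can
   be bipartite; the means over a vertex and a neighbour do not. *)
Definition pair_mean h n i := mean n i + mean n (s h i).

Lemma pair_mean_act_cvg0 h i a :
  (fun n => pair_mean h n i - pair_mean h n (s a i)) @ \oo --> 0.
Proof.
have := mean_neighbors_cvg0 (s a i) (linv a) h; rewrite sK => near_i.
have near_hi := mean_neighbors_cvg0 i h a.
by apply: (cvg0_ext _ (cvg0D near_i near_hi)) => n; rewrite /pair_mean; ring.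
Qed.

Lemma pair_mean_cvg0 h i j :
  (fun n => pair_mean h n i - pair_mean h n j) @ \oo --> 0.
Proof.
have [w <-] := s_transitive i j; elim: w => [|a w IH] /=.
  by apply: (cvg0_ext (b := fun=> 0)) => [n|]; [rewrite subrr | exact: cvg_cst].
have := pair_mean_act_cvg0 h (foldr s i w) a => step.
by apply: (cvg0_ext _ (cvg0D IH step)) => n; ring.
Qed.

Theorem pair_mean_cvg h k :
  (fun n => 2^-1 * pair_mean h n k) @ \oo --> (\sum_i mean 0 i) / m%:R.
Proof.
have m_neq0 : m%:R != 0 :> R by rewrite pnatr_eq0 -lt0n (leq_ltn_trans _ (ltn_ord k)).
apply/subr_cvg0.
apply: (cvg0_ext (b := fun n => (2 * m%:R)^-1 * \sum_j (pair_mean h n k - pair_mean h n j))).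
  move=> n; rewrite sumrB sumr_const card_ord big_split /= sum_act !(sum_mean n).
  by rewrite -[_ *+ m]mulr_natr; field.
by apply/cvg0Ml/cvg0_sum => j _; exact: pair_mean_cvg0.
Qed.

End NonBacktrackingWalk.

Lemma sum_indicator (I : finType) (V : pzSemiRingType) (a : I) :
  \sum_i ((a == i)%:R : V) = 1.
Proof. by rewrite (bigD1 a) //= eqxx big1 ?addr0 // => i /negbTE; rewrite eq_sym => ->. Qed.

Lemma sum_tupleS (T : finType) (V : nmodType) (P : pred (seq T)) (F : seq T -> V) n :
  \sum_(t : n.+1.-tuple T | P t) F t =
  \sum_x \sum_(t : n.-tuple T | P (x :: t)) F (x :: t).
Proof.
rewrite pair_big_dep /= (reindex (fun p : T * n.-tuple T => [tuple of p.1 :: p.2])) //=.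
exists (fun t : n.+1.-tuple T => (thead t, [tuple of behead t])).
  by move=> [x t] _ /=; congr pair; apply: val_inj.
by move=> [[|x t] t_size] _; apply: val_inj.
Qed.

Lemma sum_tuple0 (T : finType) (V : nmodType) (F : 0.-tuple T -> V) :
  \sum_t F t = F [tuple].
Proof. by rewrite (big_pred1 [tuple]) // => t; apply/esym/eqP/tuple0. Qed.

Lemma sum_sphere (V : nmodType) (F : seq letter -> V) n :
  \sum_(g <- sphere n) F (val g) = \sum_(t : n.-tuple letter | reduced t) F t.
Proof.
rewrite /sphere big_pmap big_image [RHS]big_mkcond /=.
by apply: eq_bigr => t _; case: {-}_ / boolP => t_red; rewrite ?t_red ?(negbTE t_red).
Qed.

Lemma sphere_uniq n : uniq (sphere n).
Proof.
apply: (pmap_uniq (g := val)); first by move=> w /=; case: {-}_ / boolP.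
by rewrite map_inj_uniq ?enum_uniq //; exact: val_inj.
Qed.

Lemma hsphereE h n : hsphere h n = map (F2mul (F2gen h)) (sphere n).
Proof. by rewrite /hsphere undup_id // map_inj_uniq ?sphere_uniq //; exact: can_inj (F2gen_mulK h). Qed.

Lemma lcoset_mul K x g : lcoset (F2mul x g) K = F2mul x @` lcoset g K.
Proof.
apply/seteqP; split => y.
  by case=> k Kk <-; exists (F2mul g k); [exists k | rewrite F2mulA].
by case=> _ [k Kk <-] <-; exists k => //; rewrite F2mulA.
Qed.

Lemma lcoset_mulr K z k : subgroup K -> K k -> lcoset (F2mul z k) K = lcoset z K.
Proof.
case=> _ KM KV Kk; apply/seteqP; split => y.
  by case=> k' Kk' <-; exists (F2mul k k'); [exact: KM | rewrite F2mulA].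
case=> k' Kk' <-; exists (F2mul (F2inv k) k'); first by apply: KM => //; exact: KV.
by rewrite F2mulA -(F2mulA k) F2mulV F2mul1l.
Qed.

Section Cosets.

Variables (K : set F2) (m : nat) (r : 'I_m -> F2).
Hypothesis r_cover : forall g, exists i, lcoset g K = lcoset (r i) K.
Hypothesis r_inj : injective (fun i => lcoset (r i) K).

Definition coset_index g : 'I_m := projT1 (cid (r_cover g)).

Lemma coset_indexP g : lcoset g K = lcoset (r (coset_index g)) K.
Proof. exact: projT2 (cid (r_cover g)). Qed.

Lemma coset_index_eq g g' :
  lcoset g K = lcoset g' K -> coset_index g = coset_index g'.
Proof. by move=> gg'; apply: r_inj => /=; rewrite -!coset_indexP. Qed.

Lemma coset_index_rep i : coset_index (r i) = i.
Proof. by apply: r_inj => /=; rewrite -coset_indexP. Qed.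

Definition coset_act x i := coset_index (F2mul (F2gen x) (r i)).

Lemma coset_index_mul x g :
  coset_index (F2mul (F2gen x) g) = coset_act x (coset_index g).
Proof. by apply: coset_index_eq; rewrite !lcoset_mul -coset_indexP. Qed.

Lemma coset_actK x : cancel (coset_act x) (coset_act (linv x)).
Proof. by move=> i; rewrite -coset_index_mul F2gen_mulK coset_index_rep. Qed.

Lemma coset_act_eq x i j : (coset_act x i == j) = (i == coset_act (linv x) j).
Proof. by have := coset_actK (linv x); rewrite linvK => /(can2_eq (coset_actK x)). Qed.

Lemma coset_index_val g :
  coset_index g = foldr coset_act (coset_index F2one) (val g).
Proof.
case: g => w; elim: w => [|x w IH] w_red; first by congr coset_index; apply: val_inj.
by rewrite [in LHS]F2_cons coset_index_mul IH.
Qed.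

Lemma coset_act_transitive i j : exists w, foldr coset_act i w = j.
Proof.
have cancel_word w k : foldr coset_act (foldr coset_act k w) (rev (map linv w)) = k.
  by elim: w => //= x w IH; rewrite rev_cons -cats1 foldr_cat /= coset_actK.
exists (val (r j) ++ rev (map linv (val (r i)))).
by rewrite foldr_cat -{1}(coset_index_rep i) coset_index_val cancel_word -coset_index_val coset_index_rep.
Qed.

Variable R : realType.

Let o := coset_index F2one.

Definition walk_count n i x : R :=
  \sum_(t : n.-tuple letter | reduced (x :: t)) (foldr coset_act o (x :: t) == i)%:R.

Definition walk_weight n i x := walk_count n i x / 3 ^+ n.

Lemma walk_count_succ n i x : walk_count n.+1 i x =
  \sum_(y | y != linv x) walk_count n (coset_act (linv x) i) y.
Proof.
rewrite /walk_count.
rewrite (sum_tupleS (fun w => reduced (x :: w)) (fun w => (foldr coset_act o (x :: w) == i)%:R)).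
rewrite [RHS]big_mkcond; apply: eq_bigr => y _ /=.
rewrite {1}/nonred; case: ifPn => [_ | _]; last by rewrite big_pred0.
by apply: eq_bigr => t _; rewrite coset_act_eq.
Qed.

Lemma walk_weight_succ n i x : walk_weight n.+1 i x =
  3^-1 * \sum_(y | y != linv x) walk_weight n (coset_act (linv x) i) y.
Proof.
have pow3_neq0 : 3 ^+ n != 0 :> R by rewrite expf_neq0 // pnatr_eq0.
by rewrite /walk_weight walk_count_succ -mulr_suml exprS; field.
Qed.

Lemma sum_mean_walk_weight0 : \sum_i mean walk_weight 0 i = 1.
Proof.
rewrite -mulr_sumr exchange_big /= (eq_bigr (fun=> 1)) => [|x _].
  by rewrite sumr_const card_ord -mulr_natr mulVf.
rewrite /walk_weight /walk_count.
under eq_bigr do rewrite expr0 divr1 big_mkcond sum_tuple0 /=.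
exact: sum_indicator.
Qed.

Lemma sphere_coset_count n j :
  \sum_(g <- sphere n.+1) (coset_index g == j)%:R = \sum_x walk_count n j x :> R.
Proof.
under eq_bigr do rewrite coset_index_val.
pose ends_in_j w : R := (foldr coset_act o w == j)%:R.
by rewrite (sum_sphere ends_in_j) (sum_tupleS reduced ends_in_j).
Qed.

Lemma sum_walk_count n j :
  \sum_x walk_count n j x = 4 * 3 ^+ n * mean walk_weight n j.
Proof.
have pow3_neq0 : 3 ^+ n != 0 :> R by rewrite expf_neq0 // pnatr_eq0.
by rewrite /mean /walk_weight -mulr_suml; field.
Qed.

Lemma size_sphere_succ n : (size (sphere n.+1))%:R = 4 * 3 ^+ n :> R.
Proof.
rewrite -sum1_size natr_sum (eq_bigr _ (fun g _ => esym (sum_indicator R (coset_index g)))).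
rewrite exchange_big /=; under eq_bigr do rewrite sphere_coset_count sum_walk_count.
by rewrite -mulr_sumr (sum_mean coset_actK walk_weight_succ) sum_mean_walk_weight0 mulr1.
Qed.

Hypothesis K_subgroup : subgroup K.

Lemma lcoset_index z g : `[< lcoset z K g >] = (coset_index g == coset_index z).
Proof.
apply/asboolP/eqP => [[k Kk <-] | gz].
  by apply: coset_index_eq; exact: lcoset_mulr.
have <- : lcoset g K = lcoset z K by rewrite coset_indexP gz -coset_indexP.
by exists F2one; [case: K_subgroup | rewrite F2mul1r].
Qed.

Lemma cnt_lcoset z s :
  cnt (lcoset z K) s = \sum_(g <- s) (coset_index g == coset_index z)%:R :> R.
Proof. by apply: eq_bigr => g _; rewrite lcoset_index. Qed.

Lemma dens_lcoset h z n : dens h (lcoset z K) n.+1 =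
  2^-1 * pair_mean coset_act walk_weight (linv h) n (coset_index z).
Proof.
rewrite /dens !cnt_lcoset sphere_coset_count hsphereE big_map size_sphere_succ.
under eq_bigr do rewrite coset_index_mul coset_act_eq.
have pow3_neq0 : 3 ^+ n != 0 :> R by rewrite expf_neq0 // pnatr_eq0.
by rewrite sphere_coset_count !sum_walk_count /pair_mean; field.
Qed.

End Cosets.

Theorem corollary5p8 (R : realType) (K : set F2) (m : nat) :
  subgroup K -> has_index K m ->
  forall (h : letter) (z : F2),
    (fun n : nat => dens (R := R) h (lcoset z K) n) @ \oo --> ((m%:R)^-1 : R).
Proof.
move=> K_subgroup [r [r_cover r_inj]] h z.
rewrite -cvg_shiftS (eq_cvg _ _ (dens_lcoset r_cover r_inj R K_subgroup h z)).
have := pair_mean_cvg (coset_actK r_cover r_inj) (coset_act_transitive r_cover r_inj)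
  (walk_weight_succ r_cover r_inj R) (linv h) (coset_index r_cover z).
by rewrite sum_mean_walk_weight0 mul1r.
Qed.
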